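(* Let $(a_i)_{i\ge1}$ be a non-decreasing sequence of positive reals with $\sum_i a_i^{-2}<\infty$, let $\mu(\theta)=\sum_i(a_i^2+2\theta)^{-1}$, $\psi(\theta)=\big(\sum_i 2\theta^2(a_i^2+2\theta)^{-2}\big)^{1/2}$, and $\rho(s)=1/\mu^{-1}(s)$ for small $s>0$. Then for every $x\in\mathbb{R}$, \[ \lim_{s\downarrow0}\frac{\psi(\mu^{-1}(s))}{\psi(\mu^{-1}(s+x\rho(s)))}=1. \]
   Context: $\mu^{-1}$ denotes the inverse function of the strictly decreasing function $\mu$ on $(0,\infty)$. *)

From Stdlib Require Import Reals ClassicalEpsilon.
Open Scope R_scope.

(* The sum of a convergent series (value of the unique limit of partial sums);
   arbitrary (chosen) value if the series diverges. *)
Definition series_val (f : nat -> R) : R :=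
  epsilon (inhabits 0) (fun l => infinite_sum f l).

(* a is indexed from 0 here (a 0 plays the role of a_1). *)
Definition mu (a : nat -> R) (theta : R) : R :=
  series_val (fun i => / (a i ^ 2 + 2 * theta)).

Definition psi (a : nat -> R) (theta : R) : R :=
  sqrt (series_val (fun i => 2 * theta ^ 2 / (a i ^ 2 + 2 * theta) ^ 2)).

(* mu^{-1}(s): the (unique, mu being strictly decreasing) theta > 0 with mu theta = s. *)
Definition mu_inv (a : nat -> R) (s : R) : R :=
  epsilon (inhabits 1) (fun theta => 0 < theta /\ mu a theta = s).

Definition rho (a : nat -> R) (s : R) : R := / mu_inv a s.

From Stdlib Require Import Reals Ranalysis5 Lra Psatz ClassicalEpsilon.
Open Scope R_scope.

(* Write A_i = a_i^2, theta = mu^{-1}(s), theta' = mu^{-1}(s + x rho(s)), and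
   psi2 = psi^2 = sum_i 2 t^2 / (A_i + 2t)^2.
   The proof rests on three estimates for the series involved:
   - mu is positive, antitone, continuous and tends to 0 at +oo, so mu^{-1}(s)
     exists for small s and tends to +oo as s -> 0;
   - psi2 t >= (2/9)(K+1) as soon as t >= A_K (a is non-decreasing), hence
     psi2 tends to +oo;
   - from mu(theta') - mu(theta) = x / theta and
     mu(t) - mu(t') = 2 (t' - t) sum_i 1/((A_i+2t)(A_i+2t')) we get
     |theta' - theta| psi2(theta) <= max(theta, theta') |x|.
   Together these say that theta'/theta -> 1, and psi2 changes by a factor at
   most (1-e)^2 when its argument changes by a factor at most 1-e. *)

Lemma series_val_spec (f : nat -> R) :
  (exists l, infinite_sum f l) -> infinite_sum f (series_val f).
Proof. intros H. exact (epsilon_spec _ _ H). Qed.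

Lemma series_scal (v : nat -> R) (c l : R) :
  infinite_sum v l -> infinite_sum (fun i => c * v i) (c * l).
Proof.
  intros Hv. apply (Un_cv_ext (fun n => c * sum_f_R0 v n)).
  - intros n. rewrite scal_sum. apply sum_eq. intros i _. ring.
  - apply CV_mult; [|exact Hv].
    intros eps Heps. exists 0%nat. intros n _. unfold Rdist.
    rewrite Rminus_diag, Rabs_R0. lra.
Qed.

Lemma series_minus (u v : nat -> R) (lu lv : R) :
  infinite_sum u lu -> infinite_sum v lv ->
  infinite_sum (fun i => u i - v i) (lu - lv).
Proof.
  intros Hu Hv. apply (Un_cv_ext (fun n => sum_f_R0 u n - sum_f_R0 v n)).
  - intros n. symmetry. apply minus_sum.
  - exact (CV_minus _ _ _ _ Hu Hv).
Qed.

Lemma series_ext (u v : nat -> R) (l : R) :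
  (forall i, u i = v i) -> infinite_sum u l -> infinite_sum v l.
Proof. intros E. apply Un_cv_ext. intros n. apply sum_eq. intros i _. apply E. Qed.

Lemma series_le (u v : nat -> R) (lu lv : R) :
  (forall i, u i <= v i) -> infinite_sum u lu -> infinite_sum v lv -> lu <= lv.
Proof. intros H. apply Rle_cv_lim. intros n. apply sum_Rle. intros i _. apply H. Qed.

Lemma series_dominated (u v : nat -> R) (c : R) :
  (forall i, 0 <= u i <= c * v i) -> (exists l, infinite_sum v l) ->
  exists l, infinite_sum u l.
Proof.
  intros H [l Hl].
  destruct (Rseries_CV_comp u (fun i => c * v i) H
              (exist _ (c * l) (series_scal v c l Hl))) as [l' Hl'].
  now exists l'.
Qed.

Lemma series_pos (u : nat -> R) (l : R) :
  (forall i, 0 < u i) -> infinite_sum u l -> 0 < l.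
Proof.
  intros Hu Hl.
  pose proof (sum_incr u 0 l Hl (fun i => Rlt_le _ _ (Hu i))) as H0.
  simpl in H0. pose proof (Hu 0%nat). lra.
Qed.

Lemma series_tail_le (u v : nat -> R) (lu lv : R) (K : nat) :
  (forall i, u i <= v i) -> infinite_sum u lu -> infinite_sum v lv ->
  lu - sum_f_R0 u K <= lv - sum_f_R0 v K.
Proof.
  intros Huv Hu Hv.
  assert (Hdiff : forall i, 0 <= v i - u i) by (intros i; pose proof (Huv i); lra).
  pose proof (sum_incr (fun i => v i - u i) K (lv - lu) (series_minus _ _ _ _ Hv Hu) Hdiff) as H.
  rewrite minus_sum in H. lra.
Qed.

Lemma frac_le (p q r s : R) : 0 < q -> 0 < s -> p * s <= r * q -> p / q <= r / s.
Proof.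
  intros Hq Hs H. apply (Rmult_le_reg_r (q * s)); [nra|].
  replace (p / q * (q * s)) with (p * s) by (field; lra).
  replace (r / s * (q * s)) with (r * q) by (field; lra). exact H.
Qed.

Lemma lipschitz_continuity_pt (f : R -> R) (t C r : R) :
  0 < r -> 0 <= C ->
  (forall y, Rabs (y - t) < r -> Rabs (f y - f t) <= C * Rabs (y - t)) ->
  continuity_pt f t.
Proof.
  intros Hr HC Hlip eps Heps.
  exists (Rmin r (eps / (C + 1))). split; [apply Rmin_pos; [lra|apply Rdiv_lt_0_compat; lra]|].
  intros y [_ Hy]. simpl in *. unfold Rdist in *.
  assert (Hy1 : Rabs (y - t) < r) by (eapply Rlt_le_trans; [exact Hy|apply Rmin_l]).
  assert (Hy2 : Rabs (y - t) * (C + 1) < eps).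
  { apply (Rmult_lt_compat_r (C + 1)) in Hy; [|lra].
    eapply Rlt_le_trans; [exact Hy|].
    replace eps with (eps / (C + 1) * (C + 1)) at 2 by (field; lra).
    apply Rmult_le_compat_r; [lra|apply Rmin_r]. }
  pose proof (Hlip y Hy1). pose proof (Rabs_pos (y - t)). nra.
Qed.

Lemma ratio_near_one (p p' e : R) :
  0 < p -> 0 < p' -> 0 <= e <= 1/2 -> (1 - e) * p <= p' -> (1 - e) * p' <= p ->
  Rabs (p / p' - 1) <= 2 * e.
Proof.
  intros Hp Hp' He H1 H2.
  set (q := p / p').
  assert (Hpq : p = q * p') by (unfold q; field; lra).
  rewrite Hpq in H1, H2.
  assert (1 - e <= q) by nra.
  assert ((1 - e) * q <= 1) by nra.
  assert (q <= 2) by nra.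
  apply Rabs_le. nra.
Qed.

Lemma close_of_max_bound (t t' e : R) :
  0 < t -> 0 < t' -> Rabs (t' - t) <= e * Rmax t t' ->
  (1 - e) * t <= t' /\ (1 - e) * t' <= t.
Proof.
  intros Ht Ht' H. unfold Rmax in H.
  destruct (Rle_dec t t').
  - rewrite Rabs_pos_eq in H by lra. split; nra.
  - rewrite Rabs_minus_sym, Rabs_pos_eq in H by lra. split; nra.
Qed.

Section SpectralSums.

Variable a : nat -> R.
Hypothesis a_pos : forall i, 0 < a i.
Hypothesis inv_sq_summable : exists L, infinite_sum (fun i => / (a i ^ 2)) L.

Definition mu_term (t : R) (i : nat) : R := / (a i ^ 2 + 2 * t).
Definition psi2_term (t : R) (i : nat) : R := 2 * t ^ 2 / (a i ^ 2 + 2 * t) ^ 2.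
Definition cross_term (t t' : R) (i : nat) : R :=
  / ((a i ^ 2 + 2 * t) * (a i ^ 2 + 2 * t')).

Definition psi2 (t : R) : R := series_val (psi2_term t).
Definition cross_sum (t t' : R) : R := series_val (cross_term t t').

Lemma sq_pos (i : nat) : 0 < a i ^ 2.
Proof. pose proof (a_pos i). nra. Qed.

(* 1/(A+2t) <= 1/A, so mu converges for every t >= 0. *)
Lemma mu_summable (t : R) : 0 <= t -> infinite_sum (mu_term t) (mu a t).
Proof.
  intros Ht. apply (series_val_spec (mu_term t)).
  apply (series_dominated _ (fun i => / (a i ^ 2)) 1); [|exact inv_sq_summable].
  intros i. unfold mu_term. pose proof (sq_pos i). split.
  - left. apply Rinv_0_lt_compat. lra.
  - rewrite Rmult_1_l. apply Rinv_le_contravar; lra.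
Qed.

(* 2 t^2/(A+2t)^2 <= t / A, so psi2 converges for every t > 0. *)
Lemma psi2_summable (t : R) : 0 < t -> infinite_sum (psi2_term t) (psi2 t).
Proof.
  intros Ht. apply (series_val_spec (psi2_term t)).
  apply (series_dominated _ (fun i => / (a i ^ 2)) t); [|exact inv_sq_summable].
  intros i. unfold psi2_term. pose proof (sq_pos i). set (A := a i ^ 2) in *; clearbody A. split.
  - left. apply Rdiv_lt_0_compat; nra.
  - change (t * / A) with (t / A). apply frac_le; [nra|lra|].
    assert (0 <= t * A * A) by (repeat apply Rmult_le_pos; lra).
    assert (0 <= t * t * t) by (repeat apply Rmult_le_pos; lra).
    simpl. nra.
Qed.

Lemma cross_term_bound (t t' : R) (i : nat) : 0 <= t -> 0 < t' ->
  0 < cross_term t t' i <= / (2 * t') * / (a i ^ 2).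
Proof.
  intros Ht Ht'. unfold cross_term. pose proof (sq_pos i). split.
  - apply Rinv_0_lt_compat. nra.
  - rewrite <- Rinv_mult. apply Rinv_le_contravar; nra.
Qed.

Lemma cross_summable (t t' : R) : 0 <= t -> 0 < t' ->
  infinite_sum (cross_term t t') (cross_sum t t').
Proof.
  intros Ht Ht'. apply series_val_spec.
  apply (series_dominated _ (fun i => / (a i ^ 2)) (/ (2 * t'))); [|exact inv_sq_summable].
  intros i. destruct (cross_term_bound t t' i Ht Ht'). lra.
Qed.

Lemma mu_pos (t : R) : 0 <= t -> 0 < mu a t.
Proof.
  intros Ht. apply (series_pos (mu_term t)); [|exact (mu_summable t Ht)].
  intros i. unfold mu_term. apply Rinv_0_lt_compat. pose proof (sq_pos i). lra.
Qed.

Lemma mu_antitone (t t' : R) : 0 <= t -> t <= t' -> mu a t' <= mu a t.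
Proof.
  intros Ht Htt. apply (series_le (mu_term t') (mu_term t)).
  - intros i. unfold mu_term. pose proof (sq_pos i). apply Rinv_le_contravar; lra.
  - apply mu_summable; lra.
  - apply mu_summable; lra.
Qed.

Lemma mu_diff (t t' : R) : 0 <= t -> 0 < t' ->
  mu a t - mu a t' = 2 * (t' - t) * cross_sum t t'.
Proof.
  intros Ht Ht'.
  pose proof (series_minus _ _ _ _ (mu_summable t Ht) (mu_summable t' (Rlt_le _ _ Ht'))) as H1.
  apply (series_ext _ (fun i => 2 * (t' - t) * cross_term t t' i)) in H1.
  - exact (uniqueness_sum _ _ _ H1 (series_scal _ _ _ (cross_summable t t' Ht Ht'))).
  - intros i. unfold mu_term, cross_term. pose proof (sq_pos i). field. split; lra.
Qed.

Lemma mu_lipschitz (L : R) (HL : infinite_sum (fun i => / (a i ^ 2)) L) (t t' : R) :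
  1/2 <= t -> 1/2 <= t' -> Rabs (mu a t - mu a t') <= 2 * L * Rabs (t - t').
Proof.
  intros Ht Ht'. rewrite mu_diff by lra.
  assert (H0 : 0 < cross_sum t t').
  { apply (series_pos (cross_term t t')); [|apply cross_summable; lra].
    intros i. apply cross_term_bound; lra. }
  assert (H1 : cross_sum t t' <= / (2 * t') * L).
  { apply (series_le _ _ _ _ (fun i => proj2 (cross_term_bound t t' i ltac:(lra) ltac:(lra)))).
    - apply cross_summable; lra.
    - apply series_scal, HL. }
  assert (HL0 : 0 < L).
  { apply (series_pos _ _ (fun i => Rinv_0_lt_compat _ (sq_pos i)) HL). }
  assert (Hinv : / (2 * t') <= 1) by (rewrite <- Rinv_1; apply Rinv_le_contravar; lra).
  rewrite !Rabs_mult, (Rabs_pos_eq 2), (Rabs_pos_eq (cross_sum t t')), Rabs_minus_sym by lra.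
  assert (Hc : cross_sum t t' <= L) by nra.
  pose proof (Rabs_pos (t - t')). nra.
Qed.

(* Hence mu is continuous on [1, +oo), which is where mu_inv is sought. *)
Lemma mu_continuous (t : R) : 1 <= t -> continuity_pt (mu a) t.
Proof.
  intros Ht. destruct inv_sq_summable as [L HL].
  apply (lipschitz_continuity_pt _ t (2 * L) (1/2)); [lra| |].
  - pose proof (series_pos _ _ (fun i => Rinv_0_lt_compat _ (sq_pos i)) HL). lra.
  - intros y Hy. apply Rabs_def2 in Hy. apply (mu_lipschitz L HL); lra.
Qed.

(* mu tends to 0 at +oo: split the series at an index K beyond which the tail
   of sum 1/A_i is small, and bound the first K+1 terms by 1/(2T). *)
Lemma mu_vanishes (s : R) : 0 < s -> exists T, 1 <= T /\ mu a T < s.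
Proof.
  intros Hs. destruct inv_sq_summable as [L HL].
  destruct (HL (s / 2) ltac:(lra)) as [K HK]. specialize (HK K (le_n K)).
  unfold Rdist in HK. apply Rabs_def2 in HK.
  set (T := (INR K + 1) / s + 1).
  assert (HsT : s * T = INR K + 1 + s) by (unfold T; field; lra).
  pose proof (pos_INR K).
  assert (HT : 1 <= T).
  { assert (0 < (INR K + 1) / s) by (apply Rdiv_lt_0_compat; lra). unfold T; lra. }
  exists T. split; [exact HT|].
  assert (Hle : forall i, mu_term T i <= / (a i ^ 2)).
  { intros i. unfold mu_term. pose proof (sq_pos i). apply Rinv_le_contravar; lra. }
  assert (Htail := series_tail_le _ _ _ _ K Hle (mu_summable T ltac:(lra)) HL).
  assert (Hhead : sum_f_R0 (mu_term T) K <= / (2 * T) * INR (S K)).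
  { rewrite <- sum_cte. apply sum_Rle. intros i _. unfold mu_term.
    pose proof (sq_pos i). apply Rinv_le_contravar; lra. }
  assert (Hsmall : / (2 * T) * INR (S K) < s / 2).
  { rewrite S_INR. apply (Rmult_lt_reg_l (2 * T)); [lra|].
    replace (2 * T * (/ (2 * T) * (INR K + 1))) with (INR K + 1) by (field; lra). nra. }
  lra.
Qed.

(* For 0 < s < mu 1, mu_inv s is a genuine preimage (intermediate value theorem). *)
Lemma mu_inv_spec (s : R) : 0 < s < mu a 1 -> 0 < mu_inv a s /\ mu a (mu_inv a s) = s.
Proof.
  intros Hs. unfold mu_inv. apply epsilon_spec.
  destruct (mu_vanishes s ltac:(lra)) as [T [HT1 HT]].
  assert (HT' : 1 < T) by (destruct HT1 as [|<-]; lra).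
  destruct (IVT_interv (fun t => s - mu a t) 1 T) as [z [Hz1 Hz2]]; simpl; try lra.
  - intros b Hb. apply continuity_pt_minus; [apply continuity_pt_const; now intros ? ?|].
    apply mu_continuous; lra.
  - exists z. split; lra.
Qed.

Lemma mu_inv_large (T s : R) : 1 <= T -> 0 < s < mu a T ->
  T < mu_inv a s /\ mu a (mu_inv a s) = s.
Proof.
  intros HT Hs.
  pose proof (mu_antitone 1 T ltac:(lra) HT).
  destruct (mu_inv_spec s ltac:(lra)) as [Hpos Heq].
  split; [|exact Heq].
  destruct (Rlt_le_dec T (mu_inv a s)) as [|Hle]; [assumption|].
  pose proof (mu_antitone _ _ (Rlt_le _ _ Hpos) Hle). lra.
Qed.

Lemma psi2_pos (t : R) : 0 < t -> 0 < psi2 t.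
Proof.
  intros Ht. apply (series_pos (psi2_term t)); [|exact (psi2_summable t Ht)].
  intros i. unfold psi2_term. pose proof (sq_pos i). apply Rdiv_lt_0_compat; nra.
Qed.

(* psi2 t <= t mu t, termwise since 2t/(A+2t) <= 1. *)
Lemma psi2_le_mu (t : R) : 0 < t -> psi2 t <= t * mu a t.
Proof.
  intros Ht. apply (series_le (psi2_term t) (fun i => t * mu_term t i)).
  - intros i. unfold psi2_term, mu_term. pose proof (sq_pos i). set (A := a i ^ 2) in *; clearbody A.
    change (t * / (A + 2 * t)) with (t / (A + 2 * t)). apply frac_le; [nra|lra|].
    assert (0 <= t * A * (A + 2 * t)) by (repeat apply Rmult_le_pos; lra). nra.
  - exact (psi2_summable t Ht).
  - apply series_scal, mu_summable. lra.
Qed.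

Lemma psi2_le_cross (t t' : R) : 0 < t -> 0 < t' ->
  psi2 t <= 2 * (t * Rmax t t') * cross_sum t t'.
Proof.
  intros Ht Ht'. set (M := Rmax t t').
  assert (HM : t <= M /\ t' <= M) by (split; [apply Rmax_l|apply Rmax_r]).
  apply (series_le (psi2_term t) (fun i => 2 * (t * M) * cross_term t t' i)).
  - intros i. unfold psi2_term, cross_term. pose proof (sq_pos i). set (A := a i ^ 2) in *; clearbody A.
    assert (HtM : t * (A + 2 * t') <= M * (A + 2 * t)) by nra.
    change (2 * (t * M) * / ((A + 2 * t) * (A + 2 * t')))
      with (2 * (t * M) / ((A + 2 * t) * (A + 2 * t'))).
    apply frac_le; [nra|nra|].
    assert (0 <= 2 * t * (A + 2 * t)) by nra.
    pose proof (Rmult_le_compat_l _ _ _ H0 HtM). nra.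
  - exact (psi2_summable t Ht).
  - apply series_scal, cross_summable; lra.
Qed.

(* Each term t/(A+2t) is nondecreasing in t, hence psi2 changes by a factor at
   most (1-e)^2 when t changes by a factor at most 1-e. *)
Lemma psi2_compare (t t' e : R) : 0 < t -> 0 < t' -> 0 <= e < 1 ->
  (1 - e) * t <= t' -> (1 - e) * t' <= t -> (1 - e) ^ 2 * psi2 t <= psi2 t'.
Proof.
  intros Ht Ht' He H1 H2.
  apply (series_le (fun i => (1 - e) ^ 2 * psi2_term t i) (psi2_term t')).
  - intros i. unfold psi2_term. pose proof (sq_pos i). set (A := a i ^ 2) in *; clearbody A.
    assert (Hf : (1 - e) * (t / (A + 2 * t)) <= t' / (A + 2 * t')).
    { rewrite Rmult_div_assoc. apply frac_le; [lra|lra|].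
      assert ((1 - e) * t * A <= t' * A) by (apply Rmult_le_compat_r; lra).
      assert ((1 - e) * (t * t') <= t * t') by (assert (0 < t * t') by nra; nra).
      nra. }
    assert (Hf0 : 0 <= (1 - e) * (t / (A + 2 * t))).
    { apply Rmult_le_pos; [lra|left; apply Rdiv_lt_0_compat; lra]. }
    replace ((1 - e) ^ 2 * (2 * t ^ 2 / (A + 2 * t) ^ 2))
      with (2 * ((1 - e) * (t / (A + 2 * t))) ^ 2) by (field; lra).
    replace (2 * t' ^ 2 / (A + 2 * t') ^ 2) with (2 * (t' / (A + 2 * t')) ^ 2) by (field; lra).
    nra.
  - exact (series_scal _ _ _ (psi2_summable t Ht)).
  - exact (psi2_summable t' Ht').
Qed.

Lemma psi_ratio_near_one (t t' e : R) : 0 < t -> 0 < t' -> 0 <= e <= 1/2 ->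
  (1 - e) * t <= t' -> (1 - e) * t' <= t ->
  Rabs (psi a t / psi a t' - 1) <= 2 * e.
Proof.
  intros Ht Ht' He H1 H2.
  change (psi a t) with (sqrt (psi2 t)). change (psi a t') with (sqrt (psi2 t')).
  assert (Hsqrt : forall g, 0 <= g -> sqrt ((1 - e) ^ 2 * g) = (1 - e) * sqrt g).
  { intros g Hg. rewrite sqrt_mult, sqrt_pow2 by (try apply pow2_ge_0; lra). reflexivity. }
  pose proof (psi2_pos t Ht). pose proof (psi2_pos t' Ht').
  apply ratio_near_one; try (apply sqrt_lt_R0; assumption); [exact He| |];
    rewrite <- Hsqrt by lra; apply sqrt_le_1_alt, psi2_compare; lra.
Qed.

Lemma shift_estimate (x t t' : R) : 0 < t -> 0 < t' -> mu a t' = mu a t + x / t ->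
  Rabs (t' - t) * psi2 t <= Rmax t t' * Rabs x.
Proof.
  intros Ht Ht' Hshift.
  pose proof (mu_diff t t' (Rlt_le _ _ Ht) Ht') as Hdiff.
  assert (Hx : x = - (2 * t * (t' - t) * cross_sum t t')).
  { rewrite Hshift in Hdiff. apply (Rmult_eq_reg_l (/ t)); [|apply Rinv_neq_0_compat; lra].
    replace (/ t * x) with (x / t) by (field; lra).
    replace (/ t * - (2 * t * (t' - t) * cross_sum t t'))
      with (- (2 * (t' - t) * cross_sum t t')) by (field; lra). lra. }
  assert (Hc : 0 < cross_sum t t').
  { apply (series_pos (cross_term t t')); [|apply cross_summable; lra].
    intros i. apply cross_term_bound; lra. }
  assert (HM : 0 < Rmax t t') by (eapply Rlt_le_trans; [exact Ht|apply Rmax_l]).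
  rewrite Hx, Rabs_Ropp, !Rabs_mult, (Rabs_pos_eq 2), (Rabs_pos_eq t),
    (Rabs_pos_eq (cross_sum t t')) by lra.
  pose proof (Rabs_pos (t' - t)).
  pose proof (Rmult_le_compat_l _ _ _ H (psi2_le_cross t t' Ht Ht')). nra.
Qed.


Lemma shift_close (x e t t' : R) : 0 < t -> 0 < t' -> mu a t' = mu a t + x / t ->
  Rabs x <= e * psi2 t -> (1 - e) * t <= t' /\ (1 - e) * t' <= t.
Proof.
  intros Ht Ht' Hshift Hx.
  pose proof (shift_estimate x t t' Ht Ht' Hshift) as Hest.
  assert (HM : 0 < Rmax t t') by (eapply Rlt_le_trans; [exact Ht|apply Rmax_l]).
  pose proof (psi2_pos t Ht).
  apply close_of_max_bound; [exact Ht|exact Ht'|].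
  apply (Rmult_le_reg_r (psi2 t)); [lra|]. nra.
Qed.

Lemma shifted_level_in_range (x t : R) : 0 < t -> Rabs x < psi2 t ->
  2 * Rabs x < t * mu a 1 -> mu a t < mu a 1 / 2 -> 0 < mu a t + x / t < mu a 1.
Proof.
  intros Ht Hpsi Hx Hmu.
  pose proof (psi2_le_mu t Ht). pose proof (Rle_abs x). pose proof (Rle_abs (- x)).
  rewrite Rabs_Ropp in *.
  replace (mu a t + x / t) with ((t * mu a t + x) / t) by (field; lra).
  split; [apply Rdiv_lt_0_compat; lra|].
  apply (Rmult_lt_reg_r t); [exact Ht|].
  replace ((t * mu a t + x) / t * t) with (t * mu a t + x) by (field; lra). nra.
Qed.

End SpectralSums.

Section Growth.

Variable a : nat -> R.
Hypothesis a_pos : forall i, 0 < a i.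
Hypothesis a_growing : Un_growing a.
Hypothesis inv_sq_summable : exists L, infinite_sum (fun i => / (a i ^ 2)) L.

(* When t >= A_K, the first K+1 terms of psi2 are each at least 2/9. *)
Lemma psi2_lower_bound (K : nat) (t : R) : a K ^ 2 <= t -> 0 < t ->
  2 / 9 * INR (S K) <= psi2 a t.
Proof.
  intros HK Ht. rewrite <- sum_cte.
  apply (Rle_trans _ (sum_f_R0 (psi2_term a t) K)).
  - apply sum_Rle. intros i Hi. unfold psi2_term.
    pose proof (growing_prop a K i a_growing Hi). pose proof (a_pos i).
    assert (HA : a i ^ 2 <= t) by nra. pose proof (sq_pos a a_pos i).
    set (A := a i ^ 2) in *; clearbody A. apply frac_le; [lra|nra|nra].
  - apply sum_incr; [exact (psi2_summable a a_pos inv_sq_summable t Ht)|].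
    intros i. unfold psi2_term. pose proof (sq_pos a a_pos i).
    left. apply Rdiv_lt_0_compat; nra.
Qed.

Lemma psi2_unbounded (B : R) : exists T, 0 < T /\ forall t, T <= t -> B <= psi2 a t.
Proof.
  destruct (INR_unbounded (9 / 2 * B)) as [K HK].
  exists (Rmax 1 (a K ^ 2)). split; [eapply Rlt_le_trans; [|apply Rmax_l]; lra|].
  intros t Ht.
  pose proof (Rmax_l 1 (a K ^ 2)). pose proof (Rmax_r 1 (a K ^ 2)).
  eapply Rle_trans; [|apply (psi2_lower_bound K t); lra].
  rewrite S_INR. lra.
Qed.

(* Taking s small makes theta large, hence
   psi2 theta >> |x|, which keeps the shifted level in range and makes the
   shift estimate effective. *)
Lemma shifted_mu_inv_close (x e : R) : 0 < e <= 1 ->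
  exists delta, 0 < delta /\ forall s, 0 < s < delta ->
    let th := mu_inv a s in let th' := mu_inv a (s + x * rho a s) in
    0 < th /\ 0 < th' /\ (1 - e) * th <= th' /\ (1 - e) * th' <= th.
Proof.
  intros He.
  set (m1 := mu a 1).
  assert (Hm1 : 0 < m1) by (apply mu_pos; auto; lra).
  destruct (psi2_unbounded ((Rabs x + 1) / e)) as [T0 [HT0 Hbig]].
  set (T := Rmax (Rmax 1 T0) (2 * Rabs x / m1 + 1)).
  assert (HT : 1 <= T /\ T0 <= T /\ 2 * Rabs x / m1 + 1 <= T).
  { unfold T. pose proof (Rmax_l 1 T0). pose proof (Rmax_r 1 T0).
    pose proof (Rmax_l (Rmax 1 T0) (2 * Rabs x / m1 + 1)).
    pose proof (Rmax_r (Rmax 1 T0) (2 * Rabs x / m1 + 1)). lra. }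
  assert (HmT : 0 < mu a T) by (apply mu_pos; auto; lra).
  exists (Rmin (m1 / 2) (mu a T)). split; [apply Rmin_pos; lra|].
  intros s [Hs Hsd] th th'.
  pose proof (Rmin_l (m1 / 2) (mu a T)). pose proof (Rmin_r (m1 / 2) (mu a T)).
  destruct (mu_inv_large a a_pos inv_sq_summable T s ltac:(lra) ltac:(lra)) as [HthT Hth].
  fold th in HthT, Hth.
  assert (Hpsi : Rabs x + 1 <= e * psi2 a th).
  { pose proof (Hbig th ltac:(lra)) as Hb. apply (Rmult_le_compat_l e) in Hb; [|lra].
    replace (e * ((Rabs x + 1) / e)) with (Rabs x + 1) in Hb by (field; lra). exact Hb. }
  assert (Hxth : 2 * Rabs x < th * m1).
  { apply (Rmult_lt_compat_r m1) in HthT; [|lra].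
    replace (2 * Rabs x) with ((2 * Rabs x / m1) * m1) by (field; lra). nra. }
  assert (Hth0 : 0 < th) by lra.
  assert (Hlevel : 0 < s + x * rho a s < m1).
  { unfold rho. fold th. rewrite <- Hth.
    pose proof (psi2_pos a a_pos inv_sq_summable th Hth0).
    assert (e * psi2 a th <= psi2 a th) by (rewrite <- (Rmult_1_l (psi2 a th)) at 2;
      apply Rmult_le_compat_r; lra).
    apply (shifted_level_in_range a a_pos inv_sq_summable); fold m1; lra. }
  destruct (mu_inv_spec a a_pos inv_sq_summable _ Hlevel) as [Hth'0 Hth'].
  fold th' in Hth'0, Hth'.
  split; [exact Hth0|split; [exact Hth'0|]].
  apply (shift_close a a_pos inv_sq_summable x); [exact Hth0|exact Hth'0| |nra].
  rewrite Hth', Hth. unfold rho. fold th. unfold Rdiv. ring.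
Qed.

End Growth.

Theorem mainTheorem12 (a : nat -> R)
  (Hpos : forall i, 0 < a i)
  (Hmono : forall i, a i <= a (S i))
  (Hsum : exists l, infinite_sum (fun i => / (a i ^ 2)) l)
  (x : R) :
  limit1_in
    (fun s => psi a (mu_inv a s) / psi a (mu_inv a (s + x * rho a s)))
    (fun s => 0 < s) 1 0.
Proof.
  intros eps Heps.
  set (e := Rmin (1/2) (eps/4)).
  assert (He : 0 < e <= 1/2 /\ e <= eps / 4).
  { pose proof (Rmin_l (1/2) (eps/4)). pose proof (Rmin_r (1/2) (eps/4)).
    pose proof (Rmin_pos (1/2) (eps/4) ltac:(lra) ltac:(lra)). unfold e. lra. }
  destruct (shifted_mu_inv_close a Hpos Hmono Hsum x e ltac:(lra)) as [delta [Hdelta Hclose]].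
  exists delta. split; [exact Hdelta|].
  intros s [Hs Hsd]. simpl in *. unfold Rdist in *.
  rewrite Rminus_0_r, Rabs_pos_eq in Hsd by lra.
  destruct (Hclose s ltac:(lra)) as [Hth [Hth' [H1 H2]]].
  eapply Rle_lt_trans; [apply psi_ratio_near_one; eauto; lra|lra].
Qed.
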